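(* Let $X$ and $Y$ be real random variables with densities $p_X,p_Y$, where $p_Y(y)\le C<\infty$ for all $y\in\mathbb{R}$ and the law of $X$ is absolutely continuous with respect to the law of $Y$. Then for every $A>0$, with $\hat{\mathcal{A}}:=\{y:\,p_Y(y)\ge 1/A\}$, and every $s>1$, \[ \begin{aligned} \mathrm{KL}(X\|Y)\le\;&(1+|\ln C|)\big[\mathbb{P}(Y\in\hat{\mathcal{A}}^c)+\|p_X-p_Y\|_1\big]\\ &+\big(\mathbb{E}_X|\ln p_Y(X)|^s\big)^{1/s}\big[\mathbb{P}(Y\in\hat{\mathcal{A}}^c)+\|p_X-p_Y\|_1\big]^{1-1/s}\\ &+(1+A)\|p_X-p_Y\|_2^2 . \end{aligned} \]
   Context: $\mathrm{KL}(X\|Y)=\int p_X\ln(p_X/p_Y)$ is the Kullback–Leibler divergence; $\|\cdot\|_q$ is the $L^q(\mathbb{R})$ norm with respect to Lebesgue measure; $\mathbb{E}_X|\ln p_Y(X)|^s=\int p_X|\ln p_Y|^s$. *)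

From HB Require Import structures.
From mathcomp Require Import all_boot all_order all_algebra.
From mathcomp Require Import all_classical all_reals all_analysis.
Set Implicit Arguments. Unset Strict Implicit. Unset Printing Implicit Defensive.
Import Order.TTheory GRing.Theory Num.Theory.
Local Open Scope classical_set_scope.
Local Open Scope ring_scope.

Definition is_density (R : realType) (p : R -> R) : Prop :=
  measurable_fun setT p /\ (forall x, 0 <= p x) /\
  (\int[@lebesgue_measure R]_x (p x)%:E = 1)%E.

Definition law_abs_cont (R : realType) (pX pY : R -> R) : Prop :=
  forall A : set R, measurable A ->
    (\int[@lebesgue_measure R]_(x in A) (pY x)%:E = 0)%E ->
    (\int[@lebesgue_measure R]_(x in A) (pX x)%:E = 0)%E.

Definition KL (R : realType) (pX pY : R -> R) : \bar R :=
  (\int[@lebesgue_measure R]_x (pX x * ln (pX x / pY x))%:E)%E.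

Definition Lq (R : realType) (q : R) (f : R -> R) : \bar R :=
  Lnorm (@lebesgue_measure R) q%:E (EFin \o f).

Definition Elog (R : realType) (pX pY : R -> R) (s : R) : \bar R :=
  (\int[@lebesgue_measure R]_x (pX x * `|ln (pY x)| `^ s)%:E)%E.

Definition Prob (R : realType) (pY : R -> R) (S : set R) : \bar R :=
  (\int[@lebesgue_measure R]_(x in S) (pY x)%:E)%E.

(* Pointwise, with x = p_X, y = p_Y and L = 1 + |ln C|:
   - where y >= 1/A, ln z <= z - 1 gives
       x ln(x/y) <= (x - y)^2/y + (x - y) <= A (x - y)^2 + L |x - y|;
   - where y < 1/A, x ln(x/y) <= x ln x + x |ln y|, and
       x ln x <= L (y + |x - y|) + (x - y)^2,
     by comparing x with 2C: below, ln x <= ln 2 + ln C <= L; above, x - y >= x/2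
     and ln x <= x/4 + 1/2.
   This bound dominates the positive part of the KL integrand, so it bounds KL.
   Integrated, its first and last terms give the first and last terms of the theorem.
   The middle one is Hoelder's inequality with exponents s and s/(s-1) applied to
   1_{y<1/A} x |ln y| = (x^(1/s) |ln y|) (1_{y<1/A} x^(1-1/s)), together with
   int_{y<1/A} x <= P(Y in Ahc) + ||p_X - p_Y||_1. *)

From HB Require Import structures.
From mathcomp Require Import all_boot all_order all_algebra.
From mathcomp Require Import all_classical all_reals all_analysis.
From mathcomp Require Import ring lra.
From mathcomp Require Import measurable_realfun.
Import Order.TTheory GRing.Theory Num.Theory.
Local Open Scope classical_set_scope.
Local Open Scope ring_scope.

Section pointwise_bounds.
Variable R : realType.
Implicit Types x y C A : R.

Lemma ln_le_subr1 x : 0 < x -> ln x <= x - 1.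
Proof. by move=> x0; have := @le_ln1Dx R (x - 1); rewrite subrKC; apply; lra. Qed.

Lemma ln2_le : ln (2 : R) <= 3 / 4.
Proof.
rewrite -ler_expR lnK ?posrE //.
have -> : (3 / 4 : R) = 6%:R * (1 / 8) by rewrite -[6%:R]/(6 : R); field.
rewrite expRM_natl; apply: le_trans (_ : (9 / 8 : R) ^+ 6 <= _).
  by rewrite !exprS expr0; lra.
apply: lerXn2r; rewrite ?nnegrE ?expR_ge0 //.
by apply: le_trans (expR_ge1Dx _); lra.
Qed.

Lemma ln_le_div4 x : 0 < x -> ln x <= x / 4 + 1 / 2.
Proof.
move=> x0; have x4 : 0 < x / 4 by rewrite divr_gt0.
have := @ln_le_subr1 (x / 4) x4; rewrite ln_div ?posrE //.
have -> : (4 : R) = 2 * 2 by rewrite -natrM.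
rewrite lnM ?posrE //; have := ln2_le; lra.
Qed.

Lemma mul_ln_le x y C : 0 <= x -> 0 <= y -> y <= C ->
  x * ln x <= (1 + `|ln C|) * (y + `|x - y|) + (x - y) ^+ 2.
Proof.
move=> x0 y0 yC; set L := 1 + `|ln C|.
have L1 : 1 <= L by rewrite lerDl.
have xy := ler_norm (x - y); have sq0 := sqr_ge0 (x - y).
have rhs0 : 0 <= L * (y + `|x - y|) by rewrite mulr_ge0 ?addr_ge0 //; lra.
move: x0; rewrite le0r => /orP[/eqP x00|x0]; first by rewrite {1}x00 mul0r; lra.
have [x2C|Cx] := lerP x (2 * C).
- have C0 : 0 < C by nra.
  have lnxL : ln x <= L.
    apply: le_trans (_ : ln (2 * C) <= _); first by rewrite ler_ln ?posrE ?mulr_gt0.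
    by rewrite lnM ?posrE // /L; have := ln2_le; have := ler_norm (ln C); lra.
  have := ler_wpM2l (ltW x0) lnxL.
  have : x * L <= (y + `|x - y|) * L by apply: ler_wpM2r; lra.
  lra.
- have hx : x * ln x <= (x / 2) ^+ 2 + x / 2.
    have -> : (x / 2) ^+ 2 + x / 2 = x * (x / 4 + 1 / 2) by rewrite expr2; field.
    exact (ler_wpM2l (ltW x0) (ln_le_div4 x x0)).
  have : (x / 2) ^+ 2 <= (x - y) ^+ 2 by rewrite lerXn2r ?nnegrE; lra.
  nra.
Qed.

Lemma mul_ln_div_le x y : 0 <= x -> 0 < y ->
  x * ln (x / y) <= (x - y) ^+ 2 / y + (x - y).
Proof.
move=> x0 y0; have -> : (x - y) ^+ 2 / y + (x - y) = x * (x / y - 1).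
  by rewrite expr2; field; rewrite gt_eqF.
have [->|xn0] := eqVneq x 0; first by rewrite !mul0r.
by rewrite ler_wpM2l // ln_le_subr1 // divr_gt0 // lt0r xn0.
Qed.

Lemma KL_integrand_le x y C A : 0 <= x -> 0 <= y -> y <= C -> 0 < A ->
  x * ln (x / y) <= (1 + `|ln C|) * ((y < A^-1)%R%:R * y + `|x - y|)
    + (y < A^-1)%R%:R * (x * `|ln y|) + (1 + A) * (x - y) ^+ 2.
Proof.
move=> x0 y0 yC A0; set L := 1 + `|ln C|.
have L1 : 1 <= L by rewrite lerDl.
have sq0 := sqr_ge0 (x - y); have xy0 := normr_ge0 (x - y).
have [y00|yn0] := eqVneq y 0.
  (* [x / 0 = 0] and [ln 0 = 0], so the left-hand side vanishes. *)
  rewrite y00 invr_gt0 A0 invr0 mulr0 ln0 // mulr0 normr0 mulr0 !mul1r.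
  rewrite add0r mulr0 addr0 subr0; apply: addr_ge0; apply: mulr_ge0;
    by rewrite ?normr_ge0 ?sqr_ge0 //; lra.
have {yn0}{}y0 : 0 < y by rewrite lt0r yn0.
have [yA|Ay] := ltrP y A^-1; rewrite !(mul1r, mul0r, add0r, addr0).
- have : x * ln (x / y) <= x * ln x + x * `|ln y|.
    have [->|xn0] := eqVneq x 0; first by rewrite !mul0r addr0.
    have x_gt0 : 0 < x by rewrite lt0r xn0.
    rewrite ln_div ?posrE // mulrBr lerD2l -mulrN.
    by apply: ler_wpM2l => //; rewrite -normrN ler_norm.
  have := mul_ln_le x y C x0 (ltW y0) yC; rewrite -/L.
  have : y <= L * y by rewrite ler_peMl // ltW.
  nra.
- have hA : (x - y) ^+ 2 / y <= A * (x - y) ^+ 2.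
    have yA : y^-1 <= A by rewrite -[A]invrK lef_pV2 ?posrE ?invr_gt0.
    by rewrite [A * _]mulrC; apply: ler_wpM2l.
  have := mul_ln_div_le x y x0 y0; have := ler_norm (x - y).
  nra.
Qed.

End pointwise_bounds.

Section integral_bounds.
Context {d} {T : measurableType d} {R : realType} (mu : {measure set T -> \bar R}).
Local Open Scope ereal_scope.

Lemma measurable_funV (D : set T) (f : T -> R) :
  measurable_fun D f -> measurable_fun D (fun x => (f x)^-1)%R.
Proof.
move=> mf.
(* Thanks to [0^-1 = 0] and [ln 0 = 0], this also holds at [y = 0]. *)
have invE (y : R) : (y^-1 = y * expR (- ln (y ^+ 2)))%R.
  have [->|y0] := eqVneq y 0%R; first by rewrite invr0 mul0r.
  rewrite expRN lnK ?posrE ?lt0r ?sqr_ge0 ?sqrf_eq0 ?y0 //.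
  by rewrite expr2 invfM mulrA mulfV // mul1r.
have -> : (fun x => (f x)^-1)%R = (fun x => f x * expR (- ln (f x ^+ 2)))%R.
  by apply/funext => x; exact: invE.
apply: measurable_funM => //; apply: measurableT_comp => //.
apply: measurableT_comp => //; apply: measurableT_comp => //.
exact: measurable_funX.
Qed.

Lemma integral_le_ge0 (D : set T) (f g : T -> R) : measurable D ->
  measurable_fun D f -> measurable_fun D g ->
  (forall x, D x -> 0 <= g x)%R -> (forall x, D x -> f x <= g x)%R ->
  \int[mu]_(x in D) (f x)%:E <= \int[mu]_(x in D) (g x)%:E.
Proof.
move=> mD mf mg g0 fg; rewrite integralE.
apply: (@le_trans _ _ (\int[mu]_(x in D) (EFin \o f)^\+ x)).
  rewrite -[leRHS]sube0; apply: leeB => //.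
  by apply: integral_ge0 => x _; exact: funeneg_ge0.
apply: ge0_le_integral => //.
- by apply: measurable_funepos; apply/measurable_EFinP.
- by apply/measurable_EFinP.
- by move=> x Dx; rewrite funeposE ge_max !lee_fin fg // g0.
Qed.

Lemma ge0_integralD_real (D : set T) (f g : T -> R) : measurable D ->
  measurable_fun D f -> measurable_fun D g ->
  (forall x, D x -> 0 <= f x)%R -> (forall x, D x -> 0 <= g x)%R ->
  \int[mu]_(x in D) (f x + g x)%:E
    = \int[mu]_(x in D) (f x)%:E + \int[mu]_(x in D) (g x)%:E.
Proof.
move=> mD mf mg f0 g0; under eq_integral do rewrite EFinD.
by apply: ge0_integralD => //; do ?[exact/measurable_EFinP];
  move=> x Dx; rewrite lee_fin ?f0 ?g0.
Qed.

Lemma ge0_integralZl_real (D : set T) (f : T -> R) (k : R) : measurable D ->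
  measurable_fun D f -> (forall x, D x -> 0 <= f x)%R -> (0 <= k)%R ->
  \int[mu]_(x in D) (k * f x)%:E = k%:E * \int[mu]_(x in D) (f x)%:E.
Proof.
move=> mD mf f0 k0; under eq_integral do rewrite EFinM.
by apply: ge0_integralZl_EFin => //; do ?[exact/measurable_EFinP];
  move=> x Dx; rewrite lee_fin f0.
Qed.

Lemma integral_indic_mul (D : set T) (f : T -> R) :
  \int[mu]_(x in D) (f x)%:E = \int[mu]_x (\1_D x * f x)%:E.
Proof.
rewrite integral_mkcond; apply: eq_integral => x _.
by rewrite patchE indicE; case: (x \in D); rewrite ?mul1r ?mul0r.
Qed.

Lemma Lnorm2_sqr (f : T -> R) :
  'N[mu]_2%:E[EFin \o f] ^+ 2 = \int[mu]_x (f x ^+ 2)%:E.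
Proof.
have -> : 'N[mu]_2%:E[EFin \o f] ^+ 2 = 'N[mu]_2%:E[EFin \o f] `^ 2.
  case: ('N[mu]_2%:E[EFin \o f]) (Lnorm_ge0 mu 2%:E (EFin \o f)) => [r||] //.
    by rewrite lee_fin => r0; rewrite -EFin_expe poweR_EFin powR_mulrn.
  by rewrite poweRyr // expe2 mulyy.
rewrite poweR_Lnorm //; apply: eq_integral => x _.
by rewrite /comp abse_EFin poweR_EFin powR_mulrn // real_normK // num_real.
Qed.

Lemma hoelder_indic (D : set T) (w f : T -> R) (s : R) :
  measurable D -> measurable_fun setT w -> measurable_fun setT f ->
  (forall x, 0 <= w x)%R -> (1 < s)%R ->
  \int[mu]_x (\1_D x * (w x * `|f x|))%:E <=
    (\int[mu]_x (w x * `|f x| `^ s)%:E) `^ s^-1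
    * (\int[mu]_x (\1_D x * w x)%:E) `^ (1 - s^-1).
Proof.
move=> mD mw mf w0 s1; have s0 : (0 < s)%R by apply: lt_trans s1.
have r0 : (0 < 1 - s^-1)%R by rewrite subr_gt0 invf_lt1.
set F := fun x => (w x `^ s^-1 * `|f x|)%R.
set G := fun x => (\1_D x * w x `^ (1 - s^-1))%R.
have mF : measurable_fun setT F.
  apply: measurable_funM; first exact: (measurableT_comp (@measurable_powR R _) mw).
  exact: (measurableT_comp (@normr_measurable R setT) mf).
have mG : measurable_fun setT G.
  apply: measurable_funM; first exact: measurable_indic.
  exact: (measurableT_comp (@measurable_powR R _) mw).
have q0 : (0 < (1 - s^-1)^-1)%R by rewrite invr_gt0.
have N1E : 'N[mu]_1[EFin \o (F \* G)%R] = \int[mu]_x (\1_D x * (w x * `|f x|))%:E.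
  rewrite Lnorm1; apply: eq_integral => x _; rewrite /comp abse_EFin /F /G.
  rewrite ger0_norm ?mulr_ge0 ?powR_ge0 //=; congr EFin.
  rewrite mulrC -mulrA; congr (_ * _)%R; rewrite mulrA -powRD ?subrK ?powRr1 //.
  by rewrite oner_eq0.
have NsE : 'N[mu]_s%:E[EFin \o F] = (\int[mu]_x (w x * `|f x| `^ s)%:E) `^ s^-1.
  rewrite unlock; congr (_ `^ _); apply: eq_integral => x _.
  rewrite /comp abse_EFin poweR_EFin /F ger0_norm ?mulr_ge0 ?powR_ge0 //.
  by rewrite powRM ?powR_ge0 // -powRrM mulVf ?gt_eqF // powRr1.
have NqE : 'N[mu]_(1 - s^-1)^-1%:E[EFin \o G]
    = (\int[mu]_x (\1_D x * w x)%:E) `^ (1 - s^-1).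
  rewrite unlock invrK; congr (_ `^ _); apply: eq_integral => x _.
  rewrite /comp abse_EFin poweR_EFin /G ger0_norm ?mulr_ge0 ?powR_ge0 //.
  rewrite powRM ?powR_ge0 // -powRrM mulfV ?gt_eqF // powRr1 //.
  by rewrite indicE; case: (x \in D); rewrite ?powR1 ?powR0 ?gt_eqF ?invr_gt0.
rewrite -N1E -NsE -NqE; apply: hoelder => //.
by rewrite invrK addrC subrK.
Qed.

End integral_bounds.

Lemma Lq1E (R : realType) (f : R -> R) :
  Lq 1 f = (\int[@lebesgue_measure R]_x (`|f x|)%:E)%E.
Proof. by rewrite /Lq Lnorm1; apply: eq_integral => x _; rewrite /comp abse_EFin. Qed.

Section KL_bound.
Context {R : realType} {pX pY : R -> R} {C A : R}.
Hypotheses (mX : measurable_fun setT pX) (mY : measurable_fun setT pY).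
Hypotheses (pX0 : forall x, 0 <= pX x) (pY0 : forall x, 0 <= pY x).
Hypotheses (pYC : forall x, pY x <= C) (A0 : 0 < A).
Local Notation mu := (@lebesgue_measure R).
Local Notation E := [set y | pY y < A^-1].
Local Notation L := (1 + `|ln C|).

Let mE : measurable E.
Proof.
have := mY measurableT _ (measurable_itv `]-oo, A^-1[); rewrite setTI.
by congr measurable; apply/seteqP; split => x /=; rewrite in_itv.
Qed.

Let mlnY : measurable_fun setT (fun x => ln (pY x)).
Proof. exact: measurableT_comp (@measurable_ln R) mY. Qed.

Let mdiff : measurable_fun setT (pX \- pY) := measurable_funB mX mY.

Let mabs_diff : measurable_fun setT (fun x => `|pX x - pY x|).
Proof. exact: measurableT_comp mdiff. Qed.

Let mindicY : measurable_fun setT (fun x => \1_E x * pY x).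
Proof. by apply: measurable_funM => //; exact: measurable_indic. Qed.

Let mindicX_lnY : measurable_fun setT (fun x => \1_E x * (pX x * `|ln (pY x)|)).
Proof.
apply: measurable_funM; first exact: measurable_indic.
exact: measurable_funM mX (measurableT_comp (@normr_measurable R setT) mlnY).
Qed.

Let indic_ge0 x : 0 <= \1_E x :> R. Proof. by rewrite indicE ler0n. Qed.

Let indicE_lt x : \1_E x = (pY x < A^-1)%R%:R :> R.
Proof.
by rewrite indicE; case: (boolP (pY x < A^-1)) => h;
  [rewrite mem_set | rewrite memNset //; exact/negP].
Qed.

Lemma Prob_add_Lq1 : (Prob pY E + Lq 1 (pX \- pY)%R =
  \int[mu]_x (\1_E x * pY x + `|pX x - pY x|)%R%:E)%E.
Proof.
rewrite /Prob integral_indic_mul Lq1E ge0_integralD_real //.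
by move=> x _; exact: mulr_ge0.
Qed.

Lemma integral_indic_le_Prob_Lq1 : (\int[mu]_x (\1_E x * pX x)%:E
  <= Prob pY E + Lq 1 (pX \- pY)%R)%E.
Proof.
rewrite Prob_add_Lq1; apply: ge0_le_integral => //.
- by move=> x _; rewrite lee_fin mulr_ge0.
- by apply/measurable_EFinP; apply: measurable_funM => //; exact: measurable_indic.
- by apply/measurable_EFinP; exact: measurable_funD.
move=> x _; rewrite lee_fin indicE; have := ler_norm (pX x - pY x).
by case: (x \in E); rewrite ?mul1r ?mul0r ?add0r //; lra.
Qed.

Lemma KL_le_split : (KL pX pY <= L%:E * (Prob pY E + Lq 1 (pX \- pY)%R)
    + \int[mu]_x (\1_E x * (pX x * `|ln (pY x)|))%:E
    + (1 + A)%:E * Lq 2 (pX \- pY)%R ^+ 2)%E.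
Proof.
set g1 := fun x => L * (\1_E x * pY x + `|pX x - pY x|).
set g2 := fun x => \1_E x * (pX x * `|ln (pY x)|).
set g3 := fun x => (1 + A) * (pX x - pY x) ^+ 2.
have mg1 : measurable_fun setT g1 by apply: measurable_funM => //; exact: measurable_funD.
have mg3 : measurable_fun setT g3 by apply: measurable_funM => //; exact: measurable_funX.
have L0 : 0 <= L by rewrite addr_ge0.
have A1 : 0 <= 1 + A by rewrite addr_ge0 // ltW.
have g1_ge0 x : 0 <= g1 x.
  exact: mulr_ge0 L0 (addr_ge0 (mulr_ge0 (indic_ge0 x) (pY0 x)) (normr_ge0 _)).
have g2_ge0 x : 0 <= g2 x.
  exact: mulr_ge0 (indic_ge0 x) (mulr_ge0 (pX0 x) (normr_ge0 _)).
have g3_ge0 x : 0 <= g3 x by exact: mulr_ge0 A1 (sqr_ge0 _).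
apply: le_trans (integral_le_ge0 mu _ _ (fun x => g1 x + g2 x + g3 x) measurableT _ _ _ _) _.
- apply: measurable_funM => //; apply: measurableT_comp => //.
  by apply: measurable_funM => //; exact: measurable_funV.
- by apply: measurable_funD => //; exact: measurable_funD.
- by move=> x _; rewrite !addr_ge0.
- by move=> x _; rewrite /g1 /g2 /g3 indicE_lt; exact: KL_integrand_le.
rewrite ge0_integralD_real //; [|exact: measurable_funD|by move=> x _; exact: addr_ge0].
rewrite ge0_integralD_real // Prob_add_Lq1 /Lq Lnorm2_sqr.
rewrite !ge0_integralZl_real //.
- exact: measurable_funX.
- by move=> x _; exact: sqr_ge0.
- exact: measurable_funD.
- by move=> x _; exact: addr_ge0 (mulr_ge0 _ _) (normr_ge0 _).
Qed.

Lemma integral_indic_ln_le_Elog (s : R) : 1 < s ->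
  (\int[mu]_x (\1_E x * (pX x * `|ln (pY x)|))%:E
    <= Elog pX pY s `^ s^-1 * (Prob pY E + Lq 1 (pX \- pY)%R) `^ (1 - s^-1))%E.
Proof.
move=> s1; apply: le_trans (hoelder_indic mu _ _ _ _ mE mX mlnY pX0 s1) _.
apply: lee_pmul => //; try exact: poweR_ge0.
apply: gt0_ler_poweR; last by apply: integral_indic_le_Prob_Lq1.
- by rewrite subr_ge0 invf_le1 ?(ltW s1) //; exact: lt_trans ltr01 s1.
- rewrite in_itv /= leey andbT.
  by apply: integral_ge0 => x _; rewrite lee_fin mulr_ge0.
- rewrite in_itv /= leey andbT.
  by apply: adde_ge0; [apply: integral_ge0 => x _; rewrite lee_fin | exact: Lnorm_ge0].
Qed.

End KL_bound.

Theorem theorem2p2 (R : realType) (pX pY : R -> R) (C : R) :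
  is_density pX -> is_density pY ->
  (forall y, pY y <= C) ->
  law_abs_cont pX pY ->
  forall A : R, 0 < A ->
  forall s : R, 1 < s ->
  let Ahc := [set y | pY y < A^-1] in
  let B := (Prob pY Ahc + Lq 1 (pX \- pY)%R)%E in
  (KL pX pY <=
     (1 + `|ln C|)%:E * B
     + (Elog pX pY s `^ s^-1) * (B `^ (1 - s^-1))
     + (1 + A)%:E * (Lq 2 (pX \- pY)%R) ^+ 2)%E.
Proof.
move=> [mX [pX0 _]] [mY [pY0 _]] pYC _ A A0 s s1; cbv zeta.
apply: le_trans (KL_le_split mX mY pX0 pY0 pYC A0) _.
by apply/leeD2r/leeD2l; exact: integral_indic_ln_le_Elog.
Qed.
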